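(* Let $\mathbb{F}\in\{\mathbb{R},\mathbb{C}\}$, let $N\ge2$, $M\ge2$ and $1\le Q\le M$ be integers, write $\mathcal{M}=\{1,\dots,M\}$, let $0<\epsilon<1$, and let $\mathbf{H}_1,\dots,\mathbf{H}_M$ be $N\times N$ positive semidefinite matrices (real symmetric if $\mathbb{F}=\mathbb{R}$, Hermitian if $\mathbb{F}=\mathbb{C}$). Let $(\hat{\boldsymbol\beta},\widehat{\mathbf{X}}^{(2)})$ be an optimal solution of (SDP3): maximize $\mathrm{Tr}[\mathbf{X}^{(2)}]$ over $\boldsymbol\beta\in\mathbb{R}^M$ and $N\times N$ matrices $\mathbf{X}^{(2)}\succeq0$ (real symmetric if $\mathbb{F}=\mathbb{R}$, Hermitian if $\mathbb{F}=\mathbb{C}$) subject to $\mathrm{Tr}[\mathbf{H}_i\mathbf{X}^{(2)}]\le\beta_i\epsilon+(1-\beta_i)$ for $i\in\mathcal{M}$, $\sum_{i\in\mathcal{M}}\beta_i=Q$, $0\le\beta_i\le1$. Let $\hat{\boldsymbol\beta}_{[Q]}$ be the $Q$-th largest entry of $\hat{\boldsymbol\beta}$ and $\widehat{\mathcal{I}}=\{i\in\mathcal{M}:\hat{\boldsymbol\beta}[i]\ge\hat{\boldsymbol\beta}_{[Q]}\}$. Then $\hat{\boldsymbol\beta}[i]\ge\frac{1}{M-Q+1}$ for all $i\in\widehat{\mathcal{I}}$.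
   Context: $\hat{\boldsymbol\beta}[i]$ denotes the $i$-th entry of $\hat{\boldsymbol\beta}$. *)

From HB Require Import structures.
From mathcomp Require Import all_boot all_order all_algebra.
From mathcomp Require Import complex.
Set Implicit Arguments. Unset Strict Implicit. Unset Printing Implicit Defensive.
Import Order.TTheory GRing.Theory Num.Theory.
Local Open Scope ring_scope.

(* Generic setting: scalars beta, eps live in the real field R; matrices have
   entries in F (F = R for the real case, F = R[i] for the complex case),
   cj is the conjugation of F (identity for R), inj : R -> F the embedding. *)

Definition psd (F : numFieldType) (cj : F -> F) (N : nat) (A : 'M[F]_N) : Prop :=
  (map_mx cj A)^T = A /\
  forall x : 'cV[F]_N, 0 <= ((map_mx cj x)^T *m A *m x) ord0 ord0.

Definition sdp3_feasible (R : realFieldType) (F : numFieldType) (cj : F -> F)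
    (inj : R -> F) (N M Q : nat) (eps : R) (H : 'I_M -> 'M[F]_N)
    (beta : 'I_M -> R) (X : 'M[F]_N) : Prop :=
  psd cj X /\
  (forall i, \tr (H i *m X) <= inj (beta i * eps + (1 - beta i))) /\
  \sum_(i < M) beta i = Q%:R /\
  (forall i, 0 <= beta i <= 1).

Definition sdp3_optimal (R : realFieldType) (F : numFieldType) (cj : F -> F)
    (inj : R -> F) (N M Q : nat) (eps : R) (H : 'I_M -> 'M[F]_N)
    (beta : 'I_M -> R) (X : 'M[F]_N) : Prop :=
  sdp3_feasible cj inj Q eps H beta X /\
  forall (beta' : 'I_M -> R) (X' : 'M[F]_N),
    sdp3_feasible cj inj Q eps H beta' X' -> \tr X' <= \tr X.

Definition kth_largest (R : realFieldType) (M : nat) (beta : 'I_M -> R) (Q : nat) : R :=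
  nth 0 (sort (fun x y : R => y <= x) [seq beta i | i <- enum 'I_M]) Q.-1.

Definition Ihat (R : realFieldType) (M : nat) (beta : 'I_M -> R) (Q : nat) : {set 'I_M} :=
  [set i | kth_largest beta Q <= beta i].

Definition lemma3p1_claim (R : realFieldType) (F : numFieldType) (cj : F -> F)
    (inj : R -> F) (N M Q : nat) (eps : R) : Prop :=
  forall (H : 'I_M -> 'M[F]_N) (beta : 'I_M -> R) (X : 'M[F]_N),
    (forall i, psd cj (H i)) ->
    sdp3_optimal cj inj Q eps H beta X ->
    forall i, i \in Ihat beta Q -> 1 / (M - Q + 1)%:R <= beta i.

From HB Require Import structures.
From mathcomp Require Import all_boot all_order all_algebra.
From mathcomp Require Import complex zify.
Import Order.TTheory GRing.Theory Num.Theory.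
Local Open Scope ring_scope.

(* Only the constraints on beta matter, not the matrices nor optimality: the
   Q - 1 largest entries of beta are at most 1 each, so the remaining
   M - Q + 1 entries carry total weight at least Q - (Q - 1) = 1, and each of
   them is at most the Q-th largest entry beta_[Q]. Hence
   (M - Q + 1) beta_[Q] >= 1. *)

Lemma sumr_le_size (R : numDomainType) (c : R) (s : seq R) :
  {in s, forall x, x <= c} -> \sum_(x <- s) x <= c *+ size s.
Proof.
elim: s => [|x s IHs] le_c; first by rewrite big_nil.
rewrite big_cons mulrS lerD ?le_c ?mem_head // IHs // => y s_y.
by rewrite le_c // inE s_y orbT.
Qed.

Section SortedNonincreasing.
Context {R : realFieldType}.
Implicit Types (s : seq R) (k : nat).

Local Notation ge := (fun x y : R => y <= x).

Let ge_trans : transitive ge.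
Proof. by move=> x y z le_xy le_zx; apply: le_trans le_xy. Qed.

Lemma sorted_ge_drop_le s k :
  sorted ge s -> (k < size s)%N -> {in drop k s, forall x, x <= nth 0 s k}.
Proof.
move=> s_sorted lt_k_s; have := drop_sorted k s_sorted.
rewrite (drop_nth 0 lt_k_s) /= => /(order_path_min ge_trans).
by move=> /allP ge_nth x; rewrite inE => /predU1P[-> // | /ge_nth].
Qed.

Lemma sum_sorted_ge_le s k :
  sorted ge s -> {in s, forall x, x <= 1} -> (k < size s)%N ->
  \sum_(x <- s) x <= k%:R + nth 0 s k *+ (size s - k).
Proof.
move=> s_sorted le1 lt_k_s.
rewrite -{1}(cat_take_drop k s) big_cat /= lerD //.
  rewrite -{2}(size_takel (ltnW lt_k_s)).
  by apply: (@sumr_le_size _ 1) => x /mem_take /le1.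
by rewrite -size_drop; apply: sumr_le_size; apply: sorted_ge_drop_le.
Qed.

End SortedNonincreasing.

Lemma kth_largest_ge (R : realFieldType) (M Q : nat) (beta : 'I_M -> R) :
  (1 <= Q <= M)%N -> \sum_(i < M) beta i = Q%:R -> (forall i, beta i <= 1) ->
  1 / (M - Q + 1)%:R <= kth_largest beta Q.
Proof.
move=> /andP[Q_gt0 le_QM] sum_beta le1.
rewrite /kth_largest; set s := sort _ _.
have size_s : size s = M by rewrite size_sort size_map size_enum_ord.
have sum_s : \sum_(x <- s) x = Q%:R.
  by rewrite (perm_big _ (permEl (perm_sort _ _))) big_map big_enum.
have s_le1 : {in s, forall x, x <= 1}.
  by move=> x; rewrite mem_sort => /mapP[i _ ->].
have s_sorted : sorted (fun x y : R => y <= x) s.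
  by apply: sort_sorted => x y; apply: le_total.
have lt_Q_s : (Q.-1 < size s)%N by rewrite size_s prednK.
have := sum_sorted_ge_le _ _ s_sorted s_le1 lt_Q_s.
have -> : (size s - Q.-1 = M - Q + 1)%N by rewrite size_s; lia.
rewrite sum_s -[in X in X <= _](prednK Q_gt0) -natr1 lerD2l => le1_mul.
by rewrite ler_pdivrMr ?ltr0n ?addn1 // mulr_natr -addn1.
Qed.

Lemma lemma3p1_claimP (R : realFieldType) (F : numFieldType) (cj : F -> F)
    (inj : R -> F) (N M Q : nat) (eps : R) :
  (1 <= Q <= M)%N -> lemma3p1_claim cj inj N M Q eps.
Proof.
move=> Q_range H beta X _ [[_ [_ [sum_beta beta01]]] _] i.
rewrite inE; apply: le_trans; apply: kth_largest_ge => // j.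
by case/andP: (beta01 j).
Qed.

Theorem lemma3p1 (R : rcfType) (N M Q : nat) (eps : R) :
  (2 <= N)%N -> (2 <= M)%N -> (1 <= Q <= M)%N -> 0 < eps < 1 ->
  lemma3p1_claim (F := R) id id N M Q eps /\
  lemma3p1_claim (F := R[i]) (@conjc R) (fun r : R => (r%:C)%C) N M Q eps.
Proof. by move=> _ _ Q_range _; split; apply: lemma3p1_claimP. Qed.
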